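(* Let $I\subset\mathbb{R}$ be an interval and let $M,N\colon I^2\to I$ be continuous means such that $(M,N)$ is weakly contractive. Then there exists a unique mean $K\colon I^2\to I$ which is $(M,N)$-invariant, and the sequence of iterates $\big((M,N)^n\big)_{n\in\mathbb{N}}$ converges to $(K,K)$ uniformly on compact subsets of $I^2$.
   Context: A function $K\colon I^2\to\mathbb{R}$ is a mean in $I$ if $\min(x,y)\le K(x,y)\le\max(x,y)$ for all $x,y\in I$. $(M_n,N_n):=(M,N)^n$ denotes the $n$-th iterate of the map $(x,y)\mapsto(M(x,y),N(x,y))$. $(M,N)$ is weakly contractive if for all $x,y\in I$ with $x\ne y$ there exists a positive integer $n$ with $|M_n(x,y)-N_n(x,y)|<|x-y|$. A mean $K$ is $(M,N)$-invariant if $K(M(x,y),N(x,y))=K(x,y)$ for all $x,y\in I$. *)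

From HB Require Import structures.
From mathcomp Require Import all_boot all_order all_algebra.
From mathcomp Require Import all_classical all_reals all_analysis.
Set Implicit Arguments. Unset Strict Implicit. Unset Printing Implicit Defensive.
Import Order.TTheory GRing.Theory Num.Theory.
Import numFieldNormedType.Exports.
Local Open Scope classical_set_scope.
Local Open Scope ring_scope.

Section Defs.
Variable R : realType.

(* "I is an interval" is the library's num_normedtype.is_interval (convexity). *)

Definition square (I : set R) : set (R * R) := [set p | I p.1 /\ I p.2].

Definition is_mean (I : set R) (K : R -> R -> R) : Prop :=
  forall x y, I x -> I y ->
    Order.min x y <= K x y /\ K x y <= Order.max x y.

Definition MN_iter (M N : R -> R -> R) (n : nat) (p : R * R) : R * R :=
  iter n (fun q : R * R => (M q.1 q.2, N q.1 q.2)) p.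

Definition weakly_contractive (I : set R) (M N : R -> R -> R) : Prop :=
  forall x y, I x -> I y -> x != y ->
    exists n : nat, (0 < n)%N /\
      `|(MN_iter M N n (x, y)).1 - (MN_iter M N n (x, y)).2| < `|x - y|.

Definition is_invariant (I : set R) (M N K : R -> R -> R) : Prop :=
  forall x y, I x -> I y -> K (M x y) (N x y) = K x y.

Definition continuous_on_square (I : set R) (M : R -> R -> R) : Prop :=
  {within square I, continuous (fun p : R * R => M p.1 p.2)}.

Definition unif_cvg_on (C : set (R * R)) (M N K : R -> R -> R) : Prop :=
  forall eps : R, 0 < eps -> exists n0 : nat, forall n : nat, (n0 <= n)%N ->
    forall p, C p ->
      `|(MN_iter M N n p).1 - K p.1 p.2| < eps /\
      `|(MN_iter M N n p).2 - K p.1 p.2| < eps.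
End Defs.

From HB Require Import structures.
From mathcomp Require Import all_boot all_order all_algebra.
From mathcomp Require Import all_classical all_reals all_analysis.
From mathcomp Require Import lra.
Import Order.TTheory GRing.Theory Num.Theory.
Import numFieldNormedType.Exports.
Local Open Scope classical_set_scope.
Local Open Scope ring_scope.

(* Since M and N are means, the hull [min, max] of the iterates (x_n, y_n) is
   nested, so its ends converge to some a <= b. If a < b, the iterates
   accumulate at (a, b) or (b, a); near such a point some fixed iterate of
   (M, N) strictly shrinks |x - y| by continuity, whereas every later hull
   still contains [a, b]. Hence a = b is the common limit K of both
   coordinates; it is a mean, it is invariant, and any other invariant mean is
   squeezed between the ends of every hull. The width |x_n - y_n| is
   continuous in the starting point and nonincreasing in n, so Dini's theorem
   makes the convergence uniform on compact sets. *)

Lemma dini_nonincreasing {T : topologicalType} {R : realType}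
    (C : set T) (f : nat -> T -> R) :
  compact C -> (forall n, {within C, continuous (f n)}) ->
  (forall x, C x -> nonincreasing_seq (f ^~ x)) ->
  (forall x, C x -> f ^~ x @ \oo --> 0) ->
  forall eps, 0 < eps -> \forall n \near \oo, forall x, C x -> f n x < eps.
Proof.
move=> /compact_near_coveringP/near_covering_withinP cC fC f_mono f0 eps eps0.
apply: (cC _ _ (fun n x => f n x < eps)) => x Cx.
have [n0 _ fn0] := cvgr_lt 0 (f0 x Cx) eps eps0.
have near_x : \forall y \near x, C y -> f n0 y < eps.
  have fn0_cvg := (subspace_continuousP _ _).1 (fC n0) x Cx.
  exact: cvgr_lt _ fn0_cvg eps (fn0 n0 (leqnn _)).
exists ([set y | C y -> f n0 y < eps], [set n | (n0 <= n)%N]) => /=.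
  by split => //; exists n0.
by case=> y n /= [ny n0n] Cy; exact: le_lt_trans (f_mono y Cy n0 n n0n) (ny Cy).
Qed.

Lemma continuous_within_iter {T : topologicalType} (A : set T) (f : T -> T) :
  (forall x, A x -> A (f x)) -> {within A, continuous f} ->
  forall n, {within A, continuous (iter n f)}.
Proof.
move=> fA /subspace_continuousP f_cont n; apply/subspace_continuousP => x Ax.
elim: n => [|n IH] /=; first exact: cvg_within.
have iterA y : A y -> A (iter n f y) by elim: n {IH} => //= n IH /IH/fA.
have iter_cvg :
    iter n f y @[y --> within A (nbhs x)] --> within A (nbhs (iter n f x)).
  move=> P; rewrite {1}/within /= => /IH; rewrite /within !nbhs_filterE /=.
  by apply: filterS => y Py Ay; exact: Py (iterA y Ay).
exact: cvg_trans (cvg_app f iter_cvg) (f_cont _ (iterA x Ax)).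
Qed.

Lemma pair_min_max {R : realDomainType} (p : R * R) :
  p = (Order.min p.1 p.2, Order.max p.1 p.2) \/
  p = (Order.max p.1 p.2, Order.min p.1 p.2).
Proof. by case: p => x y /=; case: leP; [left | right]. Qed.

Lemma norm_sub_min_max {R : realDomainType} (x y : R) :
  `|x - y| = Order.max x y - Order.min x y.
Proof.
case: leP => [xy | yx]; last by rewrite gtr0_norm // subr_gt0.
by rewrite distrC ger0_norm // subr_ge0.
Qed.

Lemma interval_hull {R : realType} {I : set R} {x y z : R} : is_interval I ->
  I x -> I y -> Order.min x y <= z -> z <= Order.max x y -> I z.
Proof.
move=> I_int Ix Iy; case: (leP x y) => _ min_z z_max.
- by apply: (I_int x y); rewrite // min_z z_max.
- by apply: (I_int y x); rewrite // min_z z_max.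
Qed.

Lemma mean_in_interval {R : realType} {I : set R} {K : R -> R -> R} {x y : R} :
  is_interval I -> is_mean I K -> I x -> I y -> I (K x y).
Proof.
move=> I_int K_mean Ix Iy; have [minK Kmax] := K_mean x y Ix Iy.
exact: interval_hull I_int Ix Iy minK Kmax.
Qed.

Section MeanIteration.
Variables (R : realType) (I : set R) (M N : R -> R -> R).
Hypotheses (I_interval : is_interval I) (M_mean : is_mean I M) (N_mean : is_mean I N).

Local Notation F := (fun q : R * R => (M q.1 q.2, N q.1 q.2)).
Local Notation it := (MN_iter M N).
Local Notation lo q := (Order.min q.1 q.2).
Local Notation hi q := (Order.max q.1 q.2).

Lemma MN_iterD m n p : it m (it n p) = it (m + n) p.
Proof. exact: esym (iterD _ _ _ _). Qed.

Lemma square_step {q} : square I q -> square I (F q).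
Proof.
case=> Iq1 Iq2; split.
- exact: (mean_in_interval I_interval M_mean).
- exact: (mean_in_interval I_interval N_mean).
Qed.

Lemma square_iter {p} n : square I p -> square I (it n p).
Proof. by move=> Ip; elim: n => //= n; exact: square_step. Qed.

Lemma hull_step {q} : square I q -> lo q <= lo (F q) /\ hi (F q) <= hi q.
Proof.
case=> Iq1 Iq2; have [minM Mmax] := M_mean _ _ Iq1 Iq2.
have [minN Nmax] := N_mean _ _ Iq1 Iq2.
by rewrite le_min ge_max minM minN Mmax Nmax.
Qed.

Lemma lo_iter_nondecreasing {p} :
  square I p -> nondecreasing_seq (fun n => lo (it n p)).
Proof.
move=> Ip; apply/nondecreasing_seqP => n.
by have [] := hull_step (square_iter n Ip).
Qed.

Lemma hi_iter_nonincreasing {p} :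
  square I p -> nonincreasing_seq (fun n => hi (it n p)).
Proof.
move=> Ip; apply/nonincreasing_seqP => n.
by have [] := hull_step (square_iter n Ip).
Qed.

Lemma lo_iter_le_hi_iter p n m : square I p -> lo (it n p) <= hi (it m p).
Proof.
move=> Ip; set k := maxn n m.
have lo_le : lo (it n p) <= lo (it k p) :=
  lo_iter_nondecreasing Ip _ _ (leq_maxl n m).
have hi_le : hi (it k p) <= hi (it m p) :=
  hi_iter_nonincreasing Ip _ _ (leq_maxr n m).
have lo_le_hi : lo (it k p) <= hi (it k p) by rewrite ge_min le_max lexx.
exact: le_trans lo_le (le_trans lo_le_hi hi_le).
Qed.

Definition lo_lim p := sup (range (fun n => lo (it n p))).
Definition hi_lim p := inf (range (fun n => hi (it n p))).

Lemma lo_iter_cvg {p} : square I p -> lo (it n p) @[n --> \oo] --> lo_lim p.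
Proof.
move=> Ip; apply: nondecreasing_cvgn (lo_iter_nondecreasing Ip) _.
by exists (hi (it 0 p)) => _ [n _ <-]; exact: lo_iter_le_hi_iter.
Qed.

Lemma hi_iter_cvg {p} : square I p -> hi (it n p) @[n --> \oo] --> hi_lim p.
Proof.
move=> Ip; apply: nonincreasing_cvgn (hi_iter_nonincreasing Ip) _.
by exists (lo (it 0 p)) => _ [n _ <-]; exact: lo_iter_le_hi_iter.
Qed.

Lemma hull_lim_bounds {p} n : square I p ->
  [/\ lo (it n p) <= lo_lim p, lo_lim p <= hi_lim p & hi_lim p <= hi (it n p)].
Proof.
move=> Ip; have hi_lb : lbound (range (fun n => hi (it n p))) (lo_lim p).
  move=> _ [m _ <-]; apply: ge_sup; first by exists (lo (it 0 p)), 0%N.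
  by move=> _ [k _ <-]; exact: lo_iter_le_hi_iter.
split.
- apply: sup_upper_bound; last by exists n.
  split; first by exists (lo (it 0 p)), 0%N.
  by exists (hi (it 0 p)) => _ [k _ <-]; exact: lo_iter_le_hi_iter.
- by apply: lb_le_inf hi_lb; exists (hi (it 0 p)), 0%N.
- by apply: ge_inf; [exists (lo_lim p) | exists n].
Qed.

Lemma dist_iter_nonincreasing {p} : square I p ->
  nonincreasing_seq (fun n => `|(it n p).1 - (it n p).2|).
Proof.
move=> Ip n m nm; rewrite !norm_sub_min_max.
exact: lerB (hi_iter_nonincreasing Ip _ _ nm) (lo_iter_nondecreasing Ip _ _ nm).
Qed.

Lemma dist_iter_lo_lim_le {p n0 n} : square I p -> (n0 <= n)%N ->
  `|(it n p).1 - lo_lim p| <= `|(it n0 p).1 - (it n0 p).2| /\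
  `|(it n p).2 - lo_lim p| <= `|(it n0 p).1 - (it n0 p).2|.
Proof.
move=> Ip n0n; have [lo_K K_le K_hi] := hull_lim_bounds n0 Ip.
have lo_le := lo_iter_nondecreasing Ip _ _ n0n.
have hi_le := hi_iter_nonincreasing Ip _ _ n0n.
have [min1 min2 max1 max2] : [/\ lo (it n p) <= (it n p).1,
    lo (it n p) <= (it n p).2, (it n p).1 <= hi (it n p) & (it n p).2 <= hi (it n p)].
  by rewrite !ge_min !le_max !lexx !orbT.
rewrite !ler_distl !norm_sub_min_max.
by split; apply/andP; split; lra.
Qed.

Definition MN_mean x y := lo_lim (x, y).

Lemma MN_mean_is_mean : is_mean I MN_mean.
Proof.
move=> x y Ix Iy; have Ixy : square I (x, y) by [].
have [lo_K K_le K_hi] := hull_lim_bounds 0 Ixy.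
by split; last exact: le_trans K_le K_hi.
Qed.

Lemma MN_mean_invariant : is_invariant I M N MN_mean.
Proof.
move=> x y Ix Iy; have Ixy : square I (x, y) by [].
have shifted : lo (it n (M x y, N x y)) @[n --> \oo] --> MN_mean x y.
  under eq_fun => n do rewrite (MN_iterD n 1 (x, y)) addn1.
  by move: (lo_iter_cvg Ixy); rewrite -cvg_shiftS.
exact: norm_cvg_unique (lo_iter_cvg (square_step Ixy)) shifted.
Qed.

Hypotheses (M_cont : continuous_on_square I M) (N_cont : continuous_on_square I N).

Lemma step_continuous : {within square I, continuous F}.
Proof.
apply/subspace_continuousP => q Iq.
exact: cvg_pair ((subspace_continuousP _ _).1 M_cont q Iq)
  ((subspace_continuousP _ _).1 N_cont q Iq).
Qed.

Lemma dist_iter_continuous n :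
  {within square I, continuous (fun p => `|(it n p).1 - (it n p).2|)}.
Proof.
have dist_cont : continuous (fun q : R * R => `|q.1 - q.2|).
  by move=> q; apply: cvg_norm; apply: cvgB; [exact: cvg_fst | exact: cvg_snd].
apply: (within_continuous_comp (square I) (it n) (fun q : R * R => `|q.1 - q.2|)).
  by move=> q _; exact: dist_cont.
exact: continuous_within_iter (@square_step) step_continuous n.
Qed.

Hypothesis MN_contractive : weakly_contractive I M N.

Lemma weakly_contractive_near {x y} : I x -> I y -> x != y ->
  exists m, \forall t \near (x, y),
    square I t -> `|(it m t).1 - (it m t).2| < `|x - y|.
Proof.
move=> Ix Iy xy; have [m [_ contr]] := MN_contractive x y Ix Iy xy.
exists m; have Ixy : square I (x, y) by [].
have dist_cvg := (subspace_continuousP _ _).1 (dist_iter_continuous m) _ Ixy.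
exact: cvgr_lt _ dist_cvg _ contr.
Qed.

Lemma lo_lim_eq_hi_lim {p} : square I p -> lo_lim p = hi_lim p.
Proof.
move=> Ip; set a := lo_lim p; set b := hi_lim p.
have [lo0_a a_b b_hi0] := hull_lim_bounds 0 Ip.
apply/eqP; rewrite eq_le a_b /= leNgt; apply/negP => a_lt_b.
have Ia : I a := interval_hull I_interval Ip.1 Ip.2 lo0_a (le_trans a_b b_hi0).
have Ib : I b := interval_hull I_interval Ip.1 Ip.2 (le_trans lo0_a a_b) b_hi0.
have dist_ge k : b - a <= `|(it k p).1 - (it k p).2|.
  have [lo_a _ b_hi] := hull_lim_bounds k Ip.
  by rewrite norm_sub_min_max; exact: lerB.
have [m1 near_ab] := weakly_contractive_near Ia Ib (negbT (lt_eqF a_lt_b)).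
have [m2 near_ba] := weakly_contractive_near Ib Ia (negbT (gt_eqF a_lt_b)).
rewrite distrC [`|b - a|]gtr0_norm ?subr_gt0 // in near_ab near_ba.
have [n1 _ close_ab] := cvg_pair (lo_iter_cvg Ip) (hi_iter_cvg Ip) near_ab.
have [n2 _ close_ba] := cvg_pair (hi_iter_cvg Ip) (lo_iter_cvg Ip) near_ba.
set n := maxn n1 n2; have Iq := square_iter n Ip.
case: (pair_min_max (it n p)) => qE.
- move: (close_ab n (leq_maxl n1 n2)); rewrite /= -qE MN_iterD => /(_ Iq).
  by rewrite ltNge dist_ge.
- move: (close_ba n (leq_maxr n1 n2)); rewrite /= -qE MN_iterD => /(_ Iq).
  by rewrite ltNge dist_ge.
Qed.

Lemma dist_iter_cvg0 {p} : square I p ->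
  `|(it n p).1 - (it n p).2| @[n --> \oo] --> 0.
Proof.
move=> Ip; rewrite -(subrr (lo_lim p)) [X in X - _](lo_lim_eq_hi_lim Ip).
under eq_fun => n do rewrite norm_sub_min_max.
exact: cvgB (hi_iter_cvg Ip) (lo_iter_cvg Ip).
Qed.

Lemma invariant_mean_unique K : is_mean I K -> is_invariant I M N K ->
  forall x y, I x -> I y -> K x y = MN_mean x y.
Proof.
move=> K_mean K_inv x y Ix Iy; set p := (x, y); have Ip : square I p by [].
have K_iter n : K (it n p).1 (it n p).2 = K x y.
  by elim: n => //= n <-; have [] := square_iter n Ip; exact: K_inv.
have K_hull n : lo (it n p) <= K x y <= hi (it n p).
  rewrite -(K_iter n); have [I1 I2] := square_iter n Ip.
  by apply/andP; exact: K_mean.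
apply/le_anti/andP; split.
- rewrite /MN_mean (lo_lim_eq_hi_lim Ip).
  apply: lb_le_inf; first by exists (hi (it 0 p)), 0%N.
  by move=> _ [n _ <-]; have /andP[] := K_hull n.
- apply: ge_sup; first by exists (lo (it 0 p)), 0%N.
  by move=> _ [n _ <-]; have /andP[] := K_hull n.
Qed.

Lemma MN_iter_unif_cvg C :
  compact C -> C `<=` square I -> unif_cvg_on C M N MN_mean.
Proof.
move=> cC CI eps eps0.
have [n0 _ small] := dini_nonincreasing C (fun n p => `|(it n p).1 - (it n p).2|) cC
  (fun n => continuous_subspaceW CI (dist_iter_continuous n))
  (fun p Cp => dist_iter_nonincreasing (CI p Cp))
  (fun p Cp => dist_iter_cvg0 (CI p Cp)) _ eps0.
exists n0 => n n0n [x y] Cxy /=.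
have [near1 near2] := dist_iter_lo_lim_le (CI _ Cxy) n0n.
have small_n0 := small n0 (leqnn n0) _ Cxy.
by split; [exact: le_lt_trans near1 small_n0 | exact: le_lt_trans near2 small_n0].
Qed.

End MeanIteration.

Theorem mainTheorem5 (R : realType) (I : set R) (M N : R -> R -> R) :
  is_interval I ->
  is_mean I M -> is_mean I N ->
  continuous_on_square I M -> continuous_on_square I N ->
  weakly_contractive I M N ->
  exists K : R -> R -> R,
    is_mean I K /\ is_invariant I M N K /\
    (forall K' : R -> R -> R, is_mean I K' -> is_invariant I M N K' ->
       forall x y, I x -> I y -> K' x y = K x y) /\
    (forall C : set (R * R), compact C -> C `<=` square I ->
       unif_cvg_on C M N K).
Proof.
move=> I_int M_mean N_mean M_cont N_cont MN_contr.
exists (MN_mean R M N); split; [|split; [|split]].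
- exact: MN_mean_is_mean.
- exact: MN_mean_invariant.
- exact: invariant_mean_unique.
- exact: MN_iter_unif_cvg.
Qed.
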